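(* Let $M$ be a deterministic finite automaton that satisfies the partial order condition. Then the minimal deterministic finite automaton accepting $L(M)$ also satisfies the partial order condition.
   Context: A DFA $(Q,\Sigma,\delta,q_0,F)$ (with $\delta$ extended to strings) satisfies the partial order condition if there do not exist two distinguishable states $q_1,q_2\in Q$ and strings $x,y\in\Sigma^+$ with $\delta(q_1,x)=\delta(q_2,x)=q_2$ and $\delta(q_2,y)=q_1$; here $q_1,q_2$ are distinguishable if there is $z\in\Sigma^*$ such that exactly one of $\delta(q_1,z),\delta(q_2,z)$ lies in $F$. *)

From mathcomp Require Import all_boot.
Set Implicit Arguments. Unset Strict Implicit. Unset Printing Implicit Defensive.

Record dfa (sigma : finType) := DFA {
  state : finType;
  delta : state -> sigma -> state;
  start : state;
  final : pred state }.
Arguments state {sigma}.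
Arguments delta {sigma d}.
Arguments start {sigma}.
Arguments final {sigma d}.

Section DFADefs.
Variable sigma : finType.
Variable M : dfa sigma.

Definition delta_star (q : state M) (w : seq sigma) : state M :=
  foldl (@delta sigma M) q w.

Definition accepts (w : seq sigma) : bool := @final sigma M (delta_star (start M) w).

Definition distinguishable (q1 q2 : state M) : Prop :=
  exists z : seq sigma,
    @final sigma M (delta_star q1 z) != @final sigma M (delta_star q2 z).

Definition partial_order_condition : Prop :=
  ~ exists (q1 q2 : state M) (x y : seq sigma),
      [/\ distinguishable q1 q2, 0 < size x, 0 < size y &
          [/\ delta_star q1 x = q2, delta_star q2 x = q2 & delta_star q2 y = q1]].
End DFADefs.

Definition same_language (sigma : finType) (M N : dfa sigma) : Prop :=
  forall w, accepts M w = accepts N w.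

Definition minimal_dfa_for (sigma : finType) (M N : dfa sigma) : Prop :=
  same_language M N /\
  forall N' : dfa sigma, same_language M N' -> #|state N| <= #|state N'|.

From mathcomp Require Import all_boot.
Set Implicit Arguments. Unset Strict Implicit. Unset Printing Implicit Defensive.

(* Minimality of N is only used to know that every state of N is reachable,
   say q1 by a word u.  Given the pattern q1 -x-> q2 -x-> q2 -y-> q1 in N,
   pass to idempotent powers in the transition monoid of M: if t = x^e and
   w = (t y)^f act idempotently on M, then the states p1 = u w^f and p2 = p1 t
   of M form the same pattern with the words t and y w^(f-1).  In N the words
   u w^f and u w^f t lead to q1 and q2, so, as M and N accept the same
   language, the suffix distinguishing q1 from q2 also distinguishes p1 from
   p2. *)

Lemma iter_periodic (T : Type) (f : T -> T) a p :
    (forall x, iter (a + p) f x = iter a f x) ->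
  forall k x, iter (a + k * p) f x = iter a f x.
Proof.
move=> per; elim=> [|k IHk] x; first by rewrite addn0.
by rewrite mulSn (addnC p) addnCA iterD per -iterD addnC IHk.
Qed.

Lemma exists_idempotent_iter (T : finType) (f : T -> T) :
  exists2 e, 0 < e & forall x, iter e f (iter e f x) = iter e f x.
Proof.
pose g (i : 'I_#|{ffun T -> T}|.+1) := [ffun x => iter i.+1 f x].
have : ~~ injectiveb g by apply/injectiveP => /leq_card; rewrite card_ord ltnn.
case/injectivePn => i [j neq_ij eq_gij].
wlog lt_ij : i j neq_ij eq_gij / i < j.
  move=> ij_case; case: (ltngtP i j) => [|lt_ji|/val_inj eq_ij]; first exact: ij_case.
  - by apply: (ij_case j i); rewrite // eq_sym.
  - by rewrite eq_ij eqxx in neq_ij.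
set a := i.+1; set p := j - i.
have per x : iter (a + p) f x = iter a f x.
  have := congr1 (fun h : {ffun T -> T} => h x) eq_gij; rewrite !ffunE => ->.
  by rewrite /a /p addSn subnKC // ltnW.
have a_gt0 : 0 < a by [].
have p_gt0 : 0 < p by rewrite subn_gt0.
(* f^a = f^(a+p), and a * p is a multiple of p that is at least a. *)
exists (a * p); first by rewrite muln_gt0 a_gt0.
have le_a_ap : a <= a * p by rewrite leq_pmulr.
move=> x /=; rewrite -iterD -{1}(subnK le_a_ap) -addnA iterD.
by rewrite (iter_periodic per) -iterD subnK.
Qed.

Section DeltaStar.
Variables (sigma : finType) (M : dfa sigma).
Implicit Types (q : state M) (u v w : seq sigma).

Lemma delta_star_cat q u v :
  delta_star q (u ++ v) = delta_star (delta_star q u) v.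
Proof. by rewrite /delta_star foldl_cat. Qed.

Definition wpow w k : seq sigma := flatten (nseq k w).

Lemma wpowS w k : wpow w k.+1 = w ++ wpow w k.
Proof. by []. Qed.

Lemma size_wpow w k : size (wpow w k) = size w * k.
Proof. by elim: k => [|k IHk]; rewrite ?muln0 // wpowS size_cat IHk mulnS. Qed.

Lemma delta_star_wpow q w k :
  delta_star q (wpow w k) = iter k (fun q => delta_star q w) q.
Proof. by elim: k q => [|k IHk] q //; rewrite wpowS delta_star_cat IHk iterSr. Qed.

Lemma delta_star_wpow_id q w k :
  delta_star q w = q -> delta_star q (wpow w k) = q.
Proof. by move=> qw; rewrite delta_star_wpow; elim: k => //= k ->. Qed.

Lemma exists_idempotent_wpow w : exists2 e, 0 < e &
  forall q, delta_star (delta_star q (wpow w e)) (wpow w e) = delta_star q (wpow w e).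
Proof.
have [e e_gt0 idem] := exists_idempotent_iter (fun q => delta_star q w).
by exists e => // q; rewrite !delta_star_wpow.
Qed.

End DeltaStar.

Section Reachable.
Variables (sigma : finType) (N : dfa sigma).
Implicit Types q : state N.

Definition step : rel (state N) := fun q q' => [exists a, delta q a == q'].

Definition reachable q : bool := connect step (start N) q.

Lemma reachableP q : reflect (exists w, delta_star (start N) w = q) (reachable q).
Proof.
apply: (iffP connectP) => [[p path_p ->] | [w <-]].
  elim: p (start N) path_p => [|q' p IHp] q0 /=; first by exists [::].
  by case/andP=> /existsP[a /eqP <-] /IHp[w <-]; exists (a :: w).
apply/connectP; elim: w (start N) => [|a w IHw] q0; first exact: connect0.
by apply: connect_trans (IHw (delta q0 a)); apply/connect1/existsP; exists a.
Qed.

Lemma reachable_delta q a : reachable q -> reachable (delta q a).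
Proof. by move/connect_trans; apply; apply/connect1/existsP; exists a. Qed.

Definition trim : dfa sigma :=
  @DFA sigma {q | reachable q}
    (fun s a => exist _ (delta (val s) a) (reachable_delta a (valP s)))
    (exist _ (start N) (connect0 _ _))
    (fun s => final (val s)).

Lemma delta_star_trim (q : state trim) w : val (delta_star q w) = delta_star (val q) w.
Proof. by elim: w q => [|a w IHw] q //=; rewrite IHw. Qed.

Lemma trim_same_language : same_language N trim.
Proof. by move=> w; rewrite /accepts /= delta_star_trim. Qed.

Lemma minimal_reachable (M : dfa sigma) q : minimal_dfa_for M N -> reachable q.
Proof.
move=> [sameMN minN]; apply/negPn/negP => unreach_q.
have := minN trim (fun w => etrans (sameMN w) (trim_same_language w)).
rewrite /= card_sig; apply/negP; rewrite -ltnNge.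
apply: proper_card; rewrite properE; apply/andP; split; first exact/subsetP.
by apply/subsetPn; exists q.
Qed.

End Reachable.

Definition forbidden_pattern (sigma : finType) (M : dfa sigma) (q1 q2 : state M)
    (x y : seq sigma) : Prop :=
  [/\ distinguishable q1 q2, 0 < size x, 0 < size y &
      [/\ delta_star q1 x = q2, delta_star q2 x = q2 & delta_star q2 y = q1]].

Section SameLanguage.
Variables (sigma : finType) (M N : dfa sigma).
Hypothesis sameMN : same_language M N.

Lemma final_delta_star_same_language u z :
  final (delta_star (delta_star (start M) u) z) =
  final (delta_star (delta_star (start N) u) z).
Proof. by rewrite -!delta_star_cat; exact: sameMN. Qed.

Lemma distinguishable_same_language u v :
  distinguishable (delta_star (start N) u) (delta_star (start N) v) ->
  distinguishable (delta_star (start M) u) (delta_star (start M) v).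
Proof. by case=> z; exists z; rewrite !final_delta_star_same_language. Qed.

Lemma forbidden_pattern_same_language u q2 x y :
    forbidden_pattern (delta_star (start N) u) q2 x y ->
  exists (p1 p2 : state M) (x' y' : seq sigma), forbidden_pattern p1 p2 x' y'.
Proof.
set q1 := delta_star _ u; move=> [dist12 x_gt0 y_gt0 [q1x q2x q2y]].
have [e e_gt0 idem_t] := exists_idempotent_wpow M x.
set t := wpow x e.
have q1t : delta_star q1 t = q2.
  by rewrite /t -(prednK e_gt0) wpowS delta_star_cat q1x delta_star_wpow_id.
set w := t ++ y.
have q1w : delta_star q1 w = q1 by rewrite delta_star_cat q1t q2y.
have [f f_gt0 idem_w] := exists_idempotent_wpow M w.
set p1 := delta_star (start M) (u ++ wpow w f).
exists p1, (delta_star p1 t), t, (y ++ wpow w f.-1); split.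
- rewrite /p1 -delta_star_cat; apply: distinguishable_same_language.
  by rewrite !delta_star_cat -/q1 (delta_star_wpow_id _ q1w) q1t.
- by rewrite size_wpow muln_gt0 x_gt0.
- by rewrite size_cat addn_gt0 y_gt0.
- split; [by [] | exact: idem_t |].
  rewrite -delta_star_cat catA -/w -wpowS prednK // /p1 !delta_star_cat.
  exact: idem_w.
Qed.

End SameLanguage.

Theorem lemma4p4 (sigma : finType) (M N : dfa sigma) :
  partial_order_condition M -> minimal_dfa_for M N -> partial_order_condition N.
Proof.
move=> poM minN [q1 [q2 [x [y pattern]]]]; apply: poM.
case/reachableP: (minimal_reachable q1 minN) pattern => u <- pattern.
exact: (forbidden_pattern_same_language minN.1 pattern).
Qed.
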